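(* For every $i\in\{1,\ldots,n\}$ the following implications are valid: (a) $\neg\hat F(\mathbf{1}^{i-1}0,\mathbf{X}_{i+1}^n,\mathbf{1}^{i},\neg\mathbf{X}_{i+1}^n,\mathbf{Y})\Rightarrow \Delta_i\Rightarrow \neg\hat F(\mathbf{0}^{i},\mathbf{X}_{i+1}^n,\mathbf{0}^{i-1}1,\neg\mathbf{X}_{i+1}^n,\mathbf{Y})$; (b) $\neg\hat F(\mathbf{1}^{i},\mathbf{X}_{i+1}^n,\mathbf{1}^{i-1}0,\neg\mathbf{X}_{i+1}^n,\mathbf{Y})\Rightarrow \Gamma_i\Rightarrow \neg\hat F(\mathbf{0}^{i-1}1,\mathbf{X}_{i+1}^n,\mathbf{0}^{i},\neg\mathbf{X}_{i+1}^n,\mathbf{Y})$.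
   Context: $\mathbf{X}=(x_1,\ldots,x_n)$ are outputs and $\mathbf{Y}=(y_1,\ldots,y_m)$ inputs; $\mathbf{X}_i^j=(x_i,\ldots,x_j)$. $\Delta_i(\mathbf{X}_{i+1}^n,\mathbf{Y})\equiv\neg\exists\mathbf{X}_1^{i-1}F(\mathbf{X}_1^{i-1},0,\mathbf{X}_{i+1}^n,\mathbf{Y})$ and $\Gamma_i(\mathbf{X}_{i+1}^n,\mathbf{Y})\equiv\neg\exists\mathbf{X}_1^{i-1}F(\mathbf{X}_1^{i-1},1,\mathbf{X}_{i+1}^n,\mathbf{Y})$ (the $0$/$1$ is in the position of $x_i$). An NNF formula uses only $\wedge,\vee$ and negations applied to variables, represented as a DAG with $\wedge/\vee$ internal nodes and literal leaves. Given a fixed NNF DAG for $F$, $\hat F(\mathbf{X},\overline{\mathbf{X}},\mathbf{Y})$ is obtained by replacing each leaf $\neg x_i$ ($x_i\in\mathbf{X}$) by a fresh variable $\overline{x_i}$. For bit-vectors $\mathbf{b},\mathbf{c}$ of length $i$, $\hat F(\mathbf{b},\mathbf{X}_{i+1}^n,\mathbf{c},\neg\mathbf{X}_{i+1}^n,\mathbf{Y})$ denotes $\hat F$ with $(x_1,\ldots,x_i):=\mathbf{b}$, $(\overline{x_1},\ldots,\overline{x_i}):=\mathbf{c}$ and $\overline{x_j}:=\neg x_j$ for $j>i$. $\mathbf{1}^{i-1}0$ denotes the length-$i$ vector with $i-1$ ones followed by a $0$, $\mathbf{0}^{i-1}1$ likewise; $\mathbf{0}^i,\mathbf{1}^i$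 are constant vectors. *)

From mathcomp Require Import all_boot.
Set Implicit Arguments. Unset Strict Implicit. Unset Printing Implicit Defensive.

(* NNF formulas over outputs x_k (k : nat, 1-based) and inputs y_k.
   The DAG representation is unfolded into a tree: sharing of subformulas
   does not affect semantics (nor the leaf-replacement defining F-hat). *)
Inductive nnf : Type :=
| PosX of nat
| NegX of nat
| PosY of nat
| NegY of nat
| And of nnf & nnf
| Or  of nnf & nnf.

Fixpoint wf_outputs (n : nat) (F : nnf) : bool :=
  match F with
  | PosX k | NegX k => (1 <= k <= n)
  | PosY _ | NegY _ => true
  | And f g | Or f g => wf_outputs n f && wf_outputs n g
  end.

Fixpoint eval (F : nnf) (x y : nat -> bool) : bool :=
  match F with
  | PosX k => x k
  | NegX k => ~~ x k
  | PosY k => y k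
  | NegY k => ~~ y k
  | And f g => eval f x y && eval g x y
  | Or f g => eval f x y || eval g x y
  end.

Fixpoint evalhat (F : nnf) (x xbar y : nat -> bool) : bool :=
  match F with
  | PosX k => x k
  | NegX k => xbar k
  | PosY k => y k
  | NegY k => ~~ y k
  | And f g => evalhat f x xbar y && evalhat g x xbar y
  | Or f g => evalhat f x xbar y || evalhat g x xbar y
  end.

Definition exists_prefix (F : nnf) (i : nat) (v : bool) (x y : nat -> bool) : Prop :=
  exists x' : nat -> bool,
    (forall j, i < j -> x' j = x j) /\ x' i = v /\ eval F x' y.

Definition Delta (F : nnf) (i : nat) (x y : nat -> bool) : Prop :=
  ~ exists_prefix F i false x y.
Definition Gamma (F : nnf) (i : nat) (x y : nat -> bool) : Prop :=
  ~ exists_prefix F i true x y.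

(* F-hat(b, X_{i+1}^n, c, ~X_{i+1}^n, Y) for bit-vectors b, c given as
   functions on positions 1..i *)
Definition Fhat_at (F : nnf) (i : nat) (b c : nat -> bool) (x y : nat -> bool) : bool :=
  evalhat F (fun j => if j <= i then b j else x j)
            (fun j => if j <= i then c j else ~~ x j) y.

(* length-i vectors, positions 1..i *)
Definition ones (i : nat) : nat -> bool := fun _ => true.
Definition zeros (i : nat) : nat -> bool := fun _ => false.
Definition ones_then0 (i : nat) : nat -> bool := fun j => j < i.
Definition zeros_then1 (i : nat) : nat -> bool := fun j => j == i.

From mathcomp Require Import all_boot.

(* F-hat is monotone in both X and Xbar because the only negations in an NNF
   formula sit on input leaves. Hence a model x' of F with x'_i = v lifts to
   every valuation of positions 1..i dominating (x', ~x'), and a valuation of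
   1..i that is dominated by some (x', ~x') yields a model of F. Each bound of
   the theorem instantiates one of these two facts with v = 0 or v = 1. *)

Lemma evalhat_mono F (x1 x2 c1 c2 y : nat -> bool) :
  (forall j, x1 j -> x2 j) -> (forall j, c1 j -> c2 j) ->
  evalhat F x1 c1 y -> evalhat F x2 c2 y.
Proof.
move=> hx hc; elim: F => //= f IHf g IHg.
- by case/andP=> /IHf -> /IHg ->.
- by case/orP=> [/IHf ->|/IHg ->]; rewrite ?orbT.
Qed.

Lemma eval_evalhat F x y : eval F x y = evalhat F x (fun j => ~~ x j) y.
Proof. by elim: F => //= f -> g ->. Qed.

Lemma Fhat_at_exists_prefix F i (v : bool) (b c x y : nat -> bool) :
  (forall j, j < i -> b j && c j) -> (v -> b i) -> (~~ v -> c i) ->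
  exists_prefix F i v x y -> Fhat_at F i b c x y.
Proof.
move=> hbc hbi hci [x' [hgt [hi]]]; rewrite eval_evalhat /Fhat_at.
apply: evalhat_mono => j; case: (ltngtP j i) => [lt_ji|gt_ji|->];
  by [case/andP: (hbc j lt_ji) | rewrite hgt | rewrite hi].
Qed.

Lemma exists_prefix_Fhat_at F i (v : bool) (b c x y : nat -> bool) :
  (forall j, j < i -> ~~ (b j && c j)) -> (b i -> v) -> (c i -> ~~ v) ->
  Fhat_at F i b c x y -> exists_prefix F i v x y.
Proof.
move=> hbc hbi hci hF.
pose x' j := if j < i then b j else if j == i then v else x j.
exists x'; split; [|split].
- by move=> j gt_ji; rewrite /x' ltnNge (ltnW gt_ji) gtn_eqF.
- by rewrite /x' ltnn eqxx.
rewrite eval_evalhat; move: hF; apply: evalhat_mono => j; rewrite /x';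
  case: (ltngtP j i) => [lt_ji|gt_ji|->] //.
by move=> cj; apply: contraNN (hbc j lt_ji) => bj; rewrite bj cj.
Qed.

Theorem lemma1 (n : nat) (F : nnf) (i : nat) (x y : nat -> bool) :
  wf_outputs n F -> 1 <= i <= n ->
  ((~~ Fhat_at F i (ones_then0 i) (ones i) x y -> Delta F i x y) /\
   (Delta F i x y -> ~~ Fhat_at F i (zeros i) (zeros_then1 i) x y)) /\
  ((~~ Fhat_at F i (ones i) (ones_then0 i) x y -> Gamma F i x y) /\
   (Gamma F i x y -> ~~ Fhat_at F i (zeros_then1 i) (zeros i) x y)).
Proof.
move=> _ _; rewrite /Delta /Gamma /ones_then0 /zeros_then1.
split; split.
- by apply: contraNnot; apply: Fhat_at_exists_prefix => // j ->.
- by apply: contra_notN; apply: exists_prefix_Fhat_at => // j /ltn_eqF ->.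
- by apply: contraNnot; apply: Fhat_at_exists_prefix => // j ->.
- by apply: contra_notN; apply: exists_prefix_Fhat_at => // j /ltn_eqF ->.
Qed.
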